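(* Let $S,T\subseteq\mathrm{Var}$ be disjoint finite sets, $\mu_1\in\mathcal{D}(\mathrm{Mem}[S])$ and $\mu_2\in\mathcal{D}(\mathrm{Mem}[T])$. Let $\mathcal{S}$ be a partition of a subset of $S$ and $\mathcal{T}$ a partition of a subset of $T$. If $\mu_1$ is $\mathcal{S}$-PNA and $\mu_2$ is $\mathcal{T}$-PNA, then every $\mu\in\mu_1\otimes\mu_2$ is $(\mathcal{S}\cup\mathcal{T})$-PNA. Consequently $\mu_1\otimes\mu_2\subseteq\mu_1\oplus\mu_2$ for all $\mu_1,\mu_2\in X$.
   Context: Fix a set $\mathrm{Var}$ of variables; values are real numbers. For finite $S\subseteq\mathrm{Var}$, $\mathrm{Mem}[S]$ is the set of maps $S\to\mathbb{R}$, ordered pointwise; $p_A(m)$ is restriction. $\mathcal{D}(Y)$ denotes countably supported probability distributions on $Y$; for $\mu\in\mathcal{D}(\mathrm{Mem}[S])$, $\mathrm{dom}(\mu)=S$ and $\pi_A\mu$ is the marginal on $A$. $X=\bigcup_{S\text{ finite}}\mathcal{D}(\mathrm{Mem}[S])$. For $\mu_1\in\mathcal{D}(\mathrm{Mem}[S])$, $\mu_2\in\mathcal{D}(\mathrm{Mem}[T])$, the independent product $\mu_1\otimes\mu_2$ is $\emptyset$ if $S\cap T\ne\emptyset$, and otherwise the singleton set of the $\mu\in\mathcal{D}(\mathrm{Mem}[S\cup T])$ with $\mu(x)=\mu_1(p_Sx)\mu_2(p_Tx)$. A partition is a set of pairwise disjoint nonempty sets; $\mathcal{T}$ coarsens $\mathcal{S}$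 if $\bigcup\mathcal{T}=\bigcup\mathcal{S}$ and each element of $\mathcal{T}$ is a union of a subfamily of $\mathcal{S}$. For a partition $\mathcal{S}$ with $\bigcup\mathcal{S}\subseteq\mathrm{dom}(\mu)$, $\mu$ is $\mathcal{S}$-PNA if for every $\mathcal{T}$ coarsening $\mathcal{S}$ and every family $(f_A:\mathrm{Mem}[A]\to[0,\infty))_{A\in\mathcal{T}}$ all non-decreasing or all non-increasing, $\mathbb{E}_{m\sim\mu}[\prod_Af_A(p_Am)]\le\prod_A\mathbb{E}_{m\sim\mu}[f_A(p_Am)]$. $\mu_1\oplus\mu_2$ is empty if $S\cap T\neq\emptyset$ and otherwise is the set of $\mu\in\mathcal{D}(\mathrm{Mem}[S\cup T])$ with $\pi_S\mu=\mu_1$, $\pi_T\mu=\mu_2$ such that $\mu$ is $(\mathcal{S}\cup\mathcal{T})$-PNA for all partitions $\mathcal{S}$ of a subset of $S$ and $\mathcal{T}$ of a subset of $T$ with $\mu_1$ $\mathcal{S}$-PNA and $\mu_2$ $\mathcal{T}$-PNA. *)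

From HB Require Import structures.
From mathcomp Require Import all_boot all_order all_algebra finmap.
From mathcomp Require Import classical_sets boolp cardinality reals constructive_ereal ereal esum.

Set Implicit Arguments.
Unset Strict Implicit.
Unset Printing Implicit Defensive.

Import Order.TTheory GRing.Theory Num.Theory.
Local Open Scope ring_scope.

Section PNA.
Variables (Var : choiceType) (R : realType).

Definition Mem (S : {fset Var}) := {ffun S -> R}.

Definition mem_le (S : {fset Var}) (m m' : Mem S) : Prop := forall x : S, m x <= m' x.

(* Restriction p_A : Mem[S] -> Mem[A]; only used when A is a subset of S
   (the default value 0 for variables outside S is never relevant). *)
Definition restr (A S : {fset Var}) (m : Mem S) : Mem A :=
  [ffun a : A => (match (insub (fsval a) : option S) with
                 | Some s => m s | None => 0 end : R)].

Record distr (S : {fset Var}) := Distr {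
  dmass :> Mem S -> R;
  dmass_ge0 : forall m, 0 <= dmass m;
  dmass_countable : countable [set m | dmass m != 0];
  dmass_sum1 : (\esum_(m in [set: Mem S]) (dmass m)%:E = 1)%E }.

Definition dom (S : {fset Var}) (mu : distr S) : {fset Var} := S.

Definition expect (S : {fset Var}) (mu : distr S) (g : Mem S -> R) : \bar R :=
  \esum_(m in [set: Mem S]) ((mu m)%:E * (g m)%:E)%E.

Definition marginal (A S : {fset Var}) (mu : distr S) (y : Mem A) : \bar R :=
  \esum_(m in [set m : Mem S | @restr A S m = y]) (mu m)%:E.

Definition bigU (P : {fset {fset Var}}) : {fset Var} := \big[fsetU/fset0]_(A <- P) A.

Definition is_partition (P : {fset {fset Var}}) : Prop :=
  (forall A, A \in P -> A != fset0) /\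
  (forall A B, A \in P -> B \in P -> A != B -> fsetI A B = fset0).

Definition partition_of_subset (P : {fset {fset Var}}) (S : {fset Var}) : Prop :=
  is_partition P /\ fsubset (bigU P) S.

Definition coarsens (Q P : {fset {fset Var}}) : Prop :=
  bigU Q = bigU P /\
  (forall B, B \in Q -> exists F : {fset {fset Var}}, fsubset F P /\ B = bigU F).

Definition nondecr (A : {fset Var}) (f : Mem A -> R) : Prop :=
  forall m m', mem_le m m' -> f m <= f m'.
Definition nonincr (A : {fset Var}) (f : Mem A -> R) : Prop :=
  forall m m', mem_le m m' -> f m' <= f m.

Definition PNA (S : {fset Var}) (mu : distr S) (P : {fset {fset Var}}) : Prop :=
  is_partition P /\ fsubset (bigU P) (dom mu) /\
  forall (Q : {fset {fset Var}}) (f : forall A : {fset Var}, Mem A -> R),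
    is_partition Q -> coarsens Q P ->
    (forall A, A \in Q -> forall m, 0 <= f A m) ->
    ((forall A, A \in Q -> nondecr (f A)) \/ (forall A, A \in Q -> nonincr (f A))) ->
    (expect mu (fun m => (\prod_(A <- Q) f A (@restr A S m))%R)
      <= \big[mule/1%E]_(A <- Q) expect mu (fun m => f A (@restr A S m)))%E.

(* Independent product mu1 (x) mu2, a subset of D(Mem[S u T]):
   empty if S and T intersect, otherwise the distributions mu with
   mu(x) = mu1(p_S x) * mu2(p_T x) (i.e. the singleton of that distribution). *)
Definition indep_prod (S T : {fset Var}) (mu1 : distr S) (mu2 : distr T)
  : set (distr (fsetU S T)) :=
  [set mu | fsetI S T = fset0 /\
     forall x : Mem (fsetU S T), mu x = mu1 (@restr S _ x) * mu2 (@restr T _ x)].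

Definition oplus (S T : {fset Var}) (mu1 : distr S) (mu2 : distr T)
  : set (distr (fsetU S T)) :=
  [set mu | fsetI S T = fset0 /\
     (forall y : Mem S, @marginal S _ mu y = (mu1 y)%:E) /\
     (forall y : Mem T, @marginal T _ mu y = (mu2 y)%:E) /\
     forall (PS PT : {fset {fset Var}}),
       partition_of_subset PS S -> partition_of_subset PT T ->
       PNA mu1 PS -> PNA mu2 PT -> PNA mu (fsetU PS PT)].

End PNA.

Arguments restr {Var R} A {S} m.
Arguments marginal {Var R} A {S} mu y.

(* Given a partition Q coarsening PS `|` PT and monotone nonnegative
   functions f_B, we bound E_mu[prod_B f_B] in two stages, by Fubini:
   - for a fixed T-part y, each f_B only reads B `&` S among the S-variables,
     and the trace of Q on S coarsens PS, so PS-PNA of mu1 bounds the inner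
     expectation by prod_B E_mu1[f_B(-, y)] (lemma pna_trace handles families
     indexed by Q that only read the traces of their blocks);
   - each conditional expectation y |-> E_mu1[f_B(-, y)] is monotone and only
     reads B `&` T, so PT-PNA of mu2 bounds the outer expectation.
   Conditional expectations must be real numbers, so the argument is first
   made for bounded f_B; general f_B are handled by truncation, since the
   expectation is a supremum of finite sums (pna_ineq_truncate). *)

From HB Require Import structures.
From mathcomp Require Import all_boot all_order all_algebra finmap.
From mathcomp Require Import classical_sets boolp cardinality reals constructive_ereal ereal esum fsbigop.

Set Implicit Arguments.
Unset Strict Implicit.
Unset Printing Implicit Defensive.
Import Order.TTheory GRing.Theory Num.Theory.
Local Open Scope ring_scope.
Local Open Scope fset_scope.

Section Memories.
Variables (Var : choiceType) (R : realType).
Local Notation Mem := (@Mem Var R).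
Implicit Types (A B S T U : {fset Var}).

(* The value of a memory at an arbitrary variable (0 outside its domain); it
   turns identities between memories on different domains into pointwise ones. *)
Definition ev S (m : Mem S) (v : Var) : R :=
  if insub v is Some s then m s else 0.

Lemma evE S (m : Mem S) (s : S) : ev m (val s) = m s.
Proof. by rewrite /ev valK. Qed.

Lemma ev_in S (m : Mem S) v (vS : v \in S) : ev m v = m [` vS].
Proof. by rewrite /ev insubT. Qed.

Lemma ev_out S (m : Mem S) v : v \notin S -> ev m v = 0.
Proof. by move=> vS; rewrite /ev insubN. Qed.

Lemma mem_ext S (m m' : Mem S) :
  (forall v, v \in S -> ev m v = ev m' v) -> m = m'.
Proof. by move=> e; apply/ffunP => s; rewrite -(evE m) -(evE m') e ?fsvalP. Qed.

Lemma mem_leP S (m m' : Mem S) :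
  (forall v, v \in S -> ev m v <= ev m' v) -> mem_le m m'.
Proof. by move=> le s; rewrite -(evE m) -(evE m') le ?fsvalP. Qed.

Lemma mem_le_ev S (m m' : Mem S) : mem_le m m' -> forall v, ev m v <= ev m' v.
Proof.
move=> le v; case: (boolP (v \in S)) => vS; last by rewrite !ev_out.
by rewrite !ev_in le.
Qed.


Lemma mem_of_empty S (m m' : Mem S) : S = fset0 -> m = m'.
Proof. by move=> S0; apply: mem_ext => v; rewrite {1}S0 inE. Qed.

Lemma ev_restr A S (m : Mem S) v :
  ev (restr A m) v = if v \in A then ev m v else 0.
Proof.
case: (boolP (v \in A)) => vA; last by rewrite ev_out.
by rewrite ev_in /restr ffunE.
Qed.

Lemma restr_le A S (m m' : Mem S) :
  mem_le m m' -> mem_le (restr A m) (restr A m').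
Proof.
move=> le; apply: mem_leP => v _; rewrite !ev_restr; case: ifP => // _.
exact: mem_le_ev.
Qed.

Definition join S T (x : Mem S) (y : Mem T) : Mem (S `|` T) :=
  [ffun v => if val v \in S then ev x (val v) else ev y (val v)].

Lemma ev_join S T (x : Mem S) (y : Mem T) v :
  ev (join x y) v = if v \in S then ev x v else ev y v.
Proof.
case: (boolP (v \in S `|` T)) => vST; first by rewrite ev_in ffunE.
move: vST; rewrite in_fsetU negb_or => /andP[vS vT].
by rewrite ev_out ?in_fsetU ?(negPf vS) ?(negPf vT) // ev_out.
Qed.

Lemma join_le S T (x x' : Mem S) (y y' : Mem T) :
  mem_le x x' -> mem_le y y' -> mem_le (join x y) (join x' y').
Proof.
move=> lex ley; apply: mem_leP => v _; rewrite !ev_join.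
by case: ifP => _; apply: mem_le_ev.
Qed.

Lemma restr_joinl S T (x : Mem S) (y : Mem T) : restr S (join x y) = x.
Proof. by apply: mem_ext => v vS; rewrite ev_restr vS ev_join vS. Qed.

Lemma disjoint_mem S T v : S `&` T = fset0 -> v \in S -> v \in T -> False.
Proof. by move=> ST0 vS vT; move: (in_fsetI S T v); rewrite ST0 inE vS vT. Qed.

Lemma restr_joinr S T (x : Mem S) (y : Mem T) :
  S `&` T = fset0 -> restr T (join x y) = y.
Proof.
move=> ST0; apply: mem_ext => v vT; rewrite ev_restr vT ev_join.
by case: ifP => // vS; case: (disjoint_mem ST0 vS vT).
Qed.

Lemma join_restr S T (m : Mem (S `|` T)) : join (restr S m) (restr T m) = m.
Proof.
apply: mem_ext => v vST; rewrite ev_join !ev_restr.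
by case: ifP => vS; [rewrite vS | move: vST; rewrite in_fsetU vS /= => ->].
Qed.

Lemma restr_join_eql B S T (x x' : Mem S) (y : Mem T) :
  restr (B `&` S) x = restr (B `&` S) x' -> restr B (join x y) = restr B (join x' y).
Proof.
move=> e; apply: mem_ext => v vB; rewrite !ev_restr vB !ev_join.
case: ifP => // vS.
by move: (congr1 (fun m => ev m v) e); rewrite !ev_restr in_fsetI vB vS.
Qed.

Lemma restr_join_eqr B S T (x : Mem S) (y y' : Mem T) :
  restr (B `&` T) y = restr (B `&` T) y' -> restr B (join x y) = restr B (join x y').
Proof.
move=> e; apply: mem_ext => v vB; rewrite !ev_restr vB !ev_join.
case: ifP => // vS; case: (boolP (v \in T)) => vT; last by rewrite !ev_out.
by move: (congr1 (fun m => ev m v) e); rewrite !ev_restr in_fsetI vB vT.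
Qed.

Definition upd A U (z : Mem A) (u0 : Mem U) : Mem U :=
  [ffun u => if val u \in A then ev z (val u) else u0 u].

Lemma ev_upd A U (z : Mem A) (u0 : Mem U) v :
  ev (upd z u0) v = if v \in U then (if v \in A then ev z v else ev u0 v) else 0.
Proof.
case: (boolP (v \in U)) => vU; last by rewrite ev_out.
by rewrite (ev_in (upd z u0) vU) ffunE /= (ev_in u0 vU).
Qed.

Lemma upd_le A U (z z' : Mem A) (u0 : Mem U) :
  mem_le z z' -> mem_le (upd z u0) (upd z' u0).
Proof.
move=> le; apply: mem_leP => v _; rewrite !ev_upd.
by do 2 case: ifP => // _; apply: mem_le_ev.
Qed.

Lemma restr_upd A U (u u0 : Mem U) : restr A (upd (restr A u) u0) = restr A u.
Proof.
apply: mem_ext => v vA; rewrite !ev_restr vA ev_upd vA ev_restr vA.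
by case: ifP => // /negbT vU; rewrite ev_out.
Qed.

End Memories.

Section Partitions.
Variable (Var : choiceType).
Implicit Types (A B C S T U : {fset Var}) (P Q : {fset {fset Var}}).

Lemma in_big_fsetU (s : seq {fset Var}) v :
  reflect (exists2 A, A \in s & v \in A) (v \in \big[fsetU/fset0]_(A <- s) A).
Proof.
elim: s => [|A s IH]; first by rewrite big_nil inE; constructor => -[].
rewrite big_cons in_fsetU; case: (boolP (v \in A)) => vA /=.
  by constructor; exists A; rewrite ?mem_head.
apply: (iffP IH) => -[B Bs vB]; exists B => //; first by rewrite inE Bs orbT.
by move: Bs; rewrite inE => /orP[/eqP eBA|//]; move: vA; rewrite -eBA vB.
Qed.

Lemma in_bigU P v : reflect (exists2 A, A \in P & v \in A) (v \in bigU P).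
Proof. exact: in_big_fsetU. Qed.

Lemma sub_bigU P A v : A \in P -> v \in A -> v \in bigU P.
Proof. by move=> AP vA; apply/in_bigU; exists A. Qed.

Lemma bigUU P P' v : (v \in bigU (P `|` P')) = (v \in bigU P) || (v \in bigU P').
Proof.
apply/in_bigU/orP => [[A]|[/in_bigU[A AP vA]|/in_bigU[A AP vA]]].
- by rewrite in_fsetU => /orP[] AP vA; [left|right]; apply: sub_bigU vA.
- by exists A; rewrite ?in_fsetU ?AP.
- by exists A; rewrite ?in_fsetU ?AP ?orbT.
Qed.

Lemma in_part_sub P S C v : partition_of_subset P S -> C \in P -> v \in C -> v \in S.
Proof. by move=> [_ /fsubsetP PS] CP vC; apply/PS/(sub_bigU CP vC). Qed.

Lemma partition_of_subsetU PS PT S T :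
  S `&` T = fset0 -> partition_of_subset PS S -> partition_of_subset PT T ->
  partition_of_subset (PS `|` PT) (S `|` T).
Proof.
move=> ST0 hPS hPT; have [[nS dS] _] := hPS; have [[nT dT] _] := hPT.
have cross A B : A \in PS -> B \in PT -> A `&` B = fset0.
  move=> AS BT; apply/fsetP => v; rewrite in_fsetI inE.
  apply/negP => /andP[vA vB].
  exact: disjoint_mem ST0 (in_part_sub hPS AS vA) (in_part_sub hPT BT vB).
split; first split.
- by move=> A; rewrite in_fsetU => /orP[/nS|/nT].
- move=> A B; rewrite !in_fsetU => /orP[AS|AT] /orP[BS|BT] nAB.
  + exact: dS.
  + exact: cross.
  + by rewrite fsetIC cross.
  + exact: dT.
apply/fsubsetP => v; rewrite bigUU in_fsetU.
case/orP => /in_bigU[C CP vC]; first by rewrite (in_part_sub hPS CP vC).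
by rewrite (in_part_sub hPT CP vC) orbT.
Qed.

Definition trace Q U : {fset {fset Var}} :=
  [fset B `&` U | B in [fset B in Q | B `&` U != fset0]].

Lemma traceP Q U A :
  reflect (exists2 B, B \in Q & B `&` U != fset0 /\ A = B `&` U) (A \in trace Q U).
Proof.
apply: (iffP idP) => [/imfsetP[B /=]|[B BQ [nB ->]]].
  by rewrite !inE /= => /andP[BQ nB] ->; exists B.
by apply/imfsetP; exists B; rewrite ?inE /= ?BQ.
Qed.

Lemma trace_inj Q U B C : is_partition Q -> B \in Q -> C \in Q ->
  B `&` U != fset0 -> B `&` U = C `&` U -> B = C.
Proof.
move=> [_ dQ] BQ CQ /fset0Pn[v vBU] e; apply/eqP; apply: contraT => nBC.
have vCU : v \in C `&` U by rewrite -e.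
move: vBU vCU (dQ _ _ BQ CQ nBC) => /fsetIP[vB _] /fsetIP[vC _] /fsetP/(_ v).
by rewrite in_fsetI vB vC inE.
Qed.

Lemma trace_partition Q U : is_partition Q -> is_partition (trace Q U).
Proof.
move=> [_ dQ]; split; first by move=> A /traceP[B _ [nB ->]].
move=> A A' /traceP[B BQ [_ ->]] /traceP[B' B'Q [_ ->]] nAA'.
have nBB' : B != B' by apply: contraNneq nAA' => ->.
apply/fsetP => v; move/fsetP/(_ v): (dQ _ _ BQ B'Q nBB').
rewrite !in_fsetI !inE => e.
by case: (v \in B) (v \in B') e => [] []; rewrite ?andbF.
Qed.

Lemma trace_coarsens S T PS PT Q :
  S `&` T = fset0 -> partition_of_subset PS S -> partition_of_subset PT T ->
  coarsens Q (PS `|` PT) -> coarsens (trace Q S) PS.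
Proof.
move=> ST0 hPS hPT [eQ hQ]; split.
  apply/fsetP => v; apply/in_bigU/in_bigU.
    move=> [A /traceP[B BQ [_ ->]]] /fsetIP[vB vS].
    move: (sub_bigU BQ vB); rewrite eQ bigUU => /orP[/in_bigU //|/in_bigU[C CT vC]].
    by case: (disjoint_mem ST0 vS (in_part_sub hPT CT vC)).
  move=> [C CS vC]; have vS := in_part_sub hPS CS vC.
  have /in_bigU[B BQ vB] : v \in bigU Q by rewrite eQ bigUU (sub_bigU CS vC).
  have vBS : v \in B `&` S by rewrite in_fsetI vB vS.
  exists (B `&` S) => //; apply/traceP; exists B => //.
  by split => //; apply/fset0Pn; exists v.
move=> A /traceP[B BQ [_ ->]]; have [F [FP eB]] := hQ B BQ.
exists [fset C in F | C \in PS]; split.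
  by apply/fsubsetP => C; rewrite !inE /= => /andP[].
apply/fsetP => v; rewrite in_fsetI; apply/idP/in_bigU.
  move=> /andP[]; rewrite eB => /in_bigU[C CF vC] vS; exists C => //.
  rewrite !inE /= CF; move: (fsubsetP FP C CF); rewrite in_fsetU => /orP[//|CT].
  by case: (disjoint_mem ST0 vS (in_part_sub hPT CT vC)).
move=> [C]; rewrite !inE /= => /andP[CF CS] vC.
by rewrite (in_part_sub hPS CS vC) andbT eB (sub_bigU CF vC).
Qed.

Lemma big_trace (I : Type) (idx : I) (op : Monoid.com_law idx) Q U
    (F : {fset Var} -> I) (G : {fset Var} -> I) :
  is_partition Q -> (forall B, B \in Q -> B `&` U != fset0 -> F B = G (B `&` U)) ->
  \big[op/idx]_(B <- Q) F B =
  op (\big[op/idx]_(B <- Q | B `&` U == fset0) F B) (\big[op/idx]_(A <- trace Q U) G A).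
Proof.
move=> pQ FG; rewrite (bigID (fun B => B `&` U == fset0)) /=; congr (op _ _).
rewrite /trace big_imfset /=; last first.
  move=> B C; rewrite !inE /= => /andP[BQ nB] /andP[CQ _] e.
  exact: trace_inj pQ BQ CQ nB e.
rewrite big_fset_condE big_seq_cond [RHS]big_seq_cond; apply: eq_bigr => B.
by rewrite !inE /= andbT => /andP[BQ nB]; rewrite FG.
Qed.

End Partitions.

Section Expectation.
Variables (Var : choiceType) (R : realType).
Local Notation Mem := (@Mem Var R).
Local Notation distr := (@distr Var R).
Implicit Types (A U : {fset Var}) (Q : {fset {fset Var}}).
Local Open Scope ereal_scope.

Lemma esumZ (T : choiceType) (I : set T) (a : T -> \bar R) (r : R) :
  (0 <= r)%R -> (forall i, 0 <= a i) ->
  \esum_(i in I) (r%:E * a i) = r%:E * \esum_(i in I) a i.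
Proof.
move=> r0 a0; rewrite /esum -ereal_supZl //; last first.
  by apply/set0P; exists 0; exists set0; [exact: fsets_set0 | rewrite fsbig_set0].
congr ereal_sup; apply/seteqP; split.
  by move=> _ /= [X hX <-]; exists (\sum_(i \in X) a i); [exists X|rewrite ge0_mule_fsumr].
by move=> _ /= [_ [X hX <-] <-]; exists X => //; rewrite ge0_mule_fsumr.
Qed.

Lemma expect_ge0 U (mu : distr U) g : (forall m, 0 <= g m)%R -> 0 <= expect mu g.
Proof.
by move=> g0; apply: esum_ge0 => m _; apply: mule_ge0; rewrite lee_fin ?dmass_ge0.
Qed.

Lemma expect_le U (mu : distr U) g h :
  (forall m, 0 <= g m)%R -> (forall m, g m <= h m)%R -> expect mu g <= expect mu h.
Proof.
by move=> g0 gh; apply: le_esum => m _; apply: lee_wpmul2l; rewrite ?lee_fin ?dmass_ge0.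
Qed.

Lemma expectZ U (mu : distr U) (k : R) g :
  (0 <= k)%R -> (forall m, 0 <= g m)%R ->
  expect mu (fun m => k * g m)%R = k%:E * expect mu g.
Proof.
move=> k0 g0; rewrite /expect -esumZ //; last first.
  by move=> m; apply: mule_ge0; rewrite lee_fin ?dmass_ge0.
by apply: eq_esum => m _; rewrite EFinM muleCA.
Qed.

Lemma expect_cst U (mu : distr U) (k : R) : (0 <= k)%R -> expect mu (fun _ => k) = k%:E.
Proof.
move=> k0; rewrite /expect; under eq_esum do rewrite muleC.
by rewrite esumZ ?dmass_sum1 ?mule1 // => m; rewrite lee_fin dmass_ge0.
Qed.

Lemma lee_prod_ge0 (I : eqType) (s : seq I) (F G : I -> \bar R) :
  (forall i, i \in s -> 0 <= F i) -> (forall i, i \in s -> F i <= G i) ->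
  \big[mule/1]_(i <- s) F i <= \big[mule/1]_(i <- s) G i.
Proof.
elim: s => [|i s IH] F0 FG; first by rewrite !big_nil.
rewrite !big_cons; apply: lee_pmul; first exact/F0/mem_head.
- by rewrite big_seq; apply: prode_ge0 => j js; apply: F0; rewrite inE js orbT.
- exact/FG/mem_head.
- by apply: IH => j js; [apply: F0 | apply: FG]; rewrite inE js orbT.
Qed.

Definition pna_ineq U (mu : distr U) Q (f : forall A, Mem A -> R) : Prop :=
  expect mu (fun m => \prod_(A <- Q) f A (restr A m))%R <=
  \big[mule/1]_(A <- Q) expect mu (fun m => f A (restr A m)).

(* It suffices to establish the inequality for bounded families: the
   expectation of the product is a supremum over finite sets of memories, on
   each of which f agrees with its truncation at a large enough level. *)
Lemma pna_ineq_truncate U (mu : distr U) Q (f : forall A, Mem A -> R) :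
  (forall A, A \in Q -> forall z, 0 <= f A z)%R ->
  (forall n : R, (0 <= n)%R -> pna_ineq mu Q (fun A z => Num.min (f A z) n)) ->
  pna_ineq mu Q f.
Proof.
move=> f0 hbounded; rewrite /pna_ineq {1}/expect /esum.
apply: ge_ereal_sup => _ [X [finX _] <-].
pose n := \big[Num.max/0%R]_(m <- fset_set X) \big[Num.max/0%R]_(A <- Q) f A (restr A m).
have n0 : (0 <= n)%R by apply: bigmax_ge_id.
pose fn A z := Num.min (f A z) n.
have fn0 A z : A \in Q -> (0 <= fn A z)%R by move=> AQ; rewrite le_min f0.
have fnE m : m \in X -> (\prod_(A <- Q) f A (restr A m) = \prod_(A <- Q) fn A (restr A m))%R.
  move=> mX; rewrite big_seq [RHS]big_seq; apply: eq_bigr => A AQ.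
  apply/esym/min_idPl; apply: (bigmax_sup_seq _ m); first by rewrite in_fset_set.
    by [].
  exact: (bigmax_sup_seq _ A).
apply: (@le_trans _ _ (expect mu (fun m => \prod_(A <- Q) fn A (restr A m))%R)).
  apply: esum_ge; exists X => //.
  by rewrite le_eqVlt; apply/orP; left; apply/eqP; apply: eq_fsbigr => m mX; rewrite fnE.
apply: le_trans (hbounded n n0) _; apply: lee_prod_ge0 => A AQ.
  by apply: expect_ge0 => m; apply: fn0.
by apply: expect_le => [m|m]; [apply: fn0 | rewrite ge_min lexx].
Qed.

End Expectation.

Section TracePNA.
Variables (Var : choiceType) (R : realType).
Local Notation Mem := (@Mem Var R).
Local Notation distr := (@distr Var R).
Implicit Types (A B U : {fset Var}) (P Q : {fset {fset Var}}).

Definition monotone_dir (b : bool) A (f : Mem A -> R) : Prop :=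
  forall m m', mem_le m m' -> if b then f m <= f m' else f m' <= f m.

Lemma monotone_dir_comp b A A' (f : Mem A -> R) (k : Mem A' -> Mem A) :
  (forall m m', mem_le m m' -> mem_le (k m) (k m')) ->
  monotone_dir b f -> monotone_dir b (f \o k).
Proof. by move=> kle fmon m m' /kle /fmon. Qed.

Lemma monotone_dir_min b A (f : Mem A -> R) (n : R) :
  monotone_dir b f -> monotone_dir b (fun z => Num.min (f z) n).
Proof.
by move=> fmon m m' /fmon; case: b {fmon} => le; rewrite le_min !ge_min lexx ?le ?orbT.
Qed.

Lemma monotone_dirP Q (f : forall A, Mem A -> R) :
  ((forall A, A \in Q -> nondecr (f A)) \/ (forall A, A \in Q -> nonincr (f A))) <->
  exists b, forall A, A \in Q -> monotone_dir b (f A).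
Proof.
split=> [[] fmon|[[] fmon]]; [exists true | exists false | left | right] => //.
Qed.

Lemma prod_same_trace Q U B (F : {fset Var} -> R) :
  is_partition Q -> B \in Q -> B `&` U != fset0 ->
  \prod_(C <- Q | C `&` U == B `&` U) F C = F B.
Proof.
move=> pQ BQ nB; rewrite big_mkcond (big_fsetD1 B) //= eqxx big1_fset ?mulr1 //.
move=> C; rewrite !inE => /andP[nCB CQ] _; case: eqP => // e.
have nC : C `&` U != fset0 by rewrite e.
by move: nCB; rewrite (trace_inj pQ CQ BQ nC e) eqxx.
Qed.

(* Blocks missing U contribute
   constants, and the other blocks are re-indexed by their traces. *)
Lemma pna_trace U (nu : distr U) P Q (h : {fset Var} -> Mem U -> R) (b : bool) :
  PNA nu P -> is_partition Q -> coarsens (trace Q U) P ->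
  (forall B, B \in Q -> forall u, 0 <= h B u) ->
  (forall B, B \in Q -> monotone_dir b (h B)) ->
  (forall B, B \in Q -> forall u u',
     restr (B `&` U) u = restr (B `&` U) u' -> h B u = h B u') ->
  (expect nu (fun u => \prod_(B <- Q) h B u)%R <=
   \big[mule/1%E]_(B <- Q) expect nu (h B))%E.
Proof.
move=> [_ [_ nuPNA]] pQ cQ h0 hmon hloc; pose u0 : Mem U := [ffun => 0].
pose g A (z : Mem A) := \prod_(C <- Q | C `&` U == A) h C (upd z u0).
have g0 A z : 0 <= g A z.
  by rewrite /g big_seq_cond; apply: prodr_ge0 => C /andP[CQ _]; apply: h0.
have ghE B u : B \in Q -> B `&` U != fset0 -> h B u = g (B `&` U) (restr (B `&` U) u).
  move=> BQ nB; rewrite /g (prod_same_trace (fun C => h C _)) //.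
  by apply: hloc; rewrite // restr_upd.
pose c := \prod_(B <- Q | B `&` U == fset0) h B u0.
have hcst B u : B \in Q -> B `&` U == fset0 -> h B u = h B u0.
  by move=> BQ /eqP BU0; apply: hloc => //; apply: mem_of_empty.
have c0 : 0 <= c by rewrite /c big_seq_cond; apply: prodr_ge0 => B /andP[BQ _]; apply: h0.
have -> : (fun u => \prod_(B <- Q) h B u) =
          (fun u => c * \prod_(A <- trace Q U) g A (restr A u)).
  apply: funext => u; rewrite (big_trace _ (U := U) (G := fun A => g A (restr A u))) //; last first.
    by move=> B BQ nB; apply: ghE.
  suff -> : \prod_(B <- Q | B `&` U == fset0) h B u = c by [].
  by rewrite /c big_seq_cond [RHS]big_seq_cond; apply: eq_bigr => B /andP[BQ BU0]; apply: hcst.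
rewrite expectZ //; last by move=> u; apply: prodr_ge0 => A _.
rewrite (big_trace _ (U := U) (G := fun A => expect nu (fun u => g A (restr A u)))) //; last first.
  by move=> B BQ nB; congr expect; apply: funext => u; apply: ghE.
have -> : \big[mule/1%E]_(B <- Q | B `&` U == fset0) expect nu (h B) = c%:E.
  rewrite /c -prodEFin big_seq_cond [RHS]big_seq_cond; apply: eq_bigr => B /andP[BQ BU0].
  by rewrite -(expect_cst nu (h0 B BQ u0)); congr expect; apply: funext => u; apply: hcst.
apply: lee_wpmul2l; first by rewrite lee_fin.
apply: nuPNA; [exact: trace_partition | exact: cQ | by move=> A _ z | ].
apply/monotone_dirP; exists b => A /traceP[B BQ [nB ->]] z z' le.
have gE z1 : g (B `&` U) z1 = h B (upd z1 u0).
  by rewrite /g (prod_same_trace (fun C => h C _)).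
by rewrite !gE; apply: hmon => //; apply: upd_le.
Qed.

End TracePNA.

Section IndependentProduct.
Variables (Var : choiceType) (R : realType).
Local Notation Mem := (@Mem Var R).
Local Notation distr := (@distr Var R).
Variables (S T : {fset Var}) (mu1 : distr S) (mu2 : distr T) (mu : distr (S `|` T)).
Hypothesis ST0 : S `&` T = fset0.
Hypothesis muE : forall x, mu x = mu1 (restr S x) * mu2 (restr T x).

(* Fubini: integrate over the T-part outside and the S-part inside. *)
Lemma expect_indep (g : Mem (S `|` T) -> R) : (forall m, 0 <= g m) ->
  expect mu g = (\esum_(y in @setT (Mem T)) (mu2 y)%:E * expect mu1 (fun x => g (join x y)))%E.
Proof.
move=> g0; rewrite /expect (reindex_esum (@setT (Mem T * Mem S)) (@setT (Mem (S `|` T)))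
   (fun p => join p.2 p.1)); last first.
  split=> [? _ //|[y x] [y' x'] _ _ /= e|m _].
  - by move: (congr1 (restr S) e) (congr1 (restr T) e); rewrite !restr_joinl !restr_joinr // => -> ->.
  - by exists (restr T m, restr S m) => //=; apply: join_restr.
have -> : @setT (Mem T * Mem S) = (@setT (Mem T) `*`` (fun _ => @setT (Mem S)))%classic.
  by apply/seteqP; split.
rewrite -(@esum_esum _ _ _ (@setT (Mem T)) (fun _ => @setT (Mem S)) (fun y x => (mu (join x y))%:E * (g (join x y))%:E)%E); last first.
  by move=> y x _ _; apply: mule_ge0; rewrite lee_fin ?dmass_ge0.
apply: eq_esum => y _; rewrite -esumZ ?dmass_ge0 //; last first.
  by move=> x; apply: mule_ge0; rewrite lee_fin ?dmass_ge0.
apply: eq_esum => x _ /=; rewrite muE restr_joinl restr_joinr //.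
by rewrite EFinM muleCA muleA.
Qed.

Lemma marginal_indepl (x : Mem S) : marginal S mu x = (mu1 x)%:E.
Proof.
rewrite /marginal (reindex_esum (@setT (Mem T)) _ (join x)); last first.
  split=> [z _ /=|z z' _ _ /= e|m /= <-]; first by rewrite restr_joinl.
    by move: (congr1 (restr T) e); rewrite !restr_joinr.
  by exists (restr T m) => //; rewrite join_restr.
under eq_esum do rewrite muE restr_joinl restr_joinr // EFinM.
by rewrite esumZ ?dmass_sum1 ?mule1 ?dmass_ge0 // => z; rewrite lee_fin dmass_ge0.
Qed.

Lemma marginal_indepr (y : Mem T) : marginal T mu y = (mu2 y)%:E.
Proof.
rewrite /marginal (reindex_esum (@setT (Mem S)) _ (fun z => join z y)); last first.
  split=> [z _ /=|z z' _ _ /= e|m /= <-]; first by rewrite restr_joinr.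
    by move: (congr1 (restr S) e); rewrite !restr_joinl.
  by exists (restr S m) => //; rewrite join_restr.
under eq_esum do rewrite muE restr_joinl restr_joinr // EFinM muleC.
by rewrite esumZ ?dmass_sum1 ?mule1 ?dmass_ge0 // => z; rewrite lee_fin dmass_ge0.
Qed.

(* The expectation of g given the T-part y, as a real number; it is the
   actual conditional expectation whenever g is bounded. *)
Definition cond_expect (g : Mem (S `|` T) -> R) (y : Mem T) : R :=
  fine (expect mu1 (fun x => g (join x y))).

Section BoundedIntegrand.
Variables (g : Mem (S `|` T) -> R) (n : R).
Hypothesis g_bounded : forall m, 0 <= g m <= n.

Let g_ge0 m : 0 <= g m.
Proof. by case/andP: (g_bounded m). Qed.

Lemma cond_expectE y : (cond_expect g y)%:E = expect mu1 (fun x => g (join x y)).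
Proof.
have n0 : 0 <= n by case/andP: (g_bounded (join [ffun => 0] y)) => /le_trans; apply.
rewrite fineK // ge0_fin_numE ?expect_ge0 //.
apply: le_lt_trans (_ : _ <= n%:E)%E _; last by rewrite ltry.
rewrite -(expect_cst mu1 n0); apply: expect_le => // x.
by case/andP: (g_bounded (join x y)).
Qed.

Lemma cond_expect_ge0 y : 0 <= cond_expect g y.
Proof. by rewrite -lee_fin cond_expectE expect_ge0. Qed.

Lemma expect_cond : expect mu g = expect mu2 (cond_expect g).
Proof.
rewrite expect_indep //.
by apply: eq_esum => y _; rewrite cond_expectE.
Qed.

Lemma cond_expect_mono b : monotone_dir b g -> monotone_dir b (cond_expect g).
Proof.
move=> gmon y y' le; rewrite -!lee_fin !cond_expectE.
by case: b gmon => gmon; apply: expect_le => // x; apply: gmon; apply: join_le.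
Qed.

End BoundedIntegrand.
End IndependentProduct.

Section PNAIndependentProduct.
Variables (Var : choiceType) (R : realType).
Local Notation Mem := (@Mem Var R).
Local Notation distr := (@distr Var R).

Section BoundedFamily.
Variables (S T : {fset Var}) (mu1 : distr S) (mu2 : distr T) (mu : distr (S `|` T)).
Variables (PS PT Q : {fset {fset Var}}) (f : forall A, Mem A -> R) (b : bool) (n : R).
Arguments f : clear implicits.
Hypotheses (ST0 : S `&` T = fset0) (muE : forall x, mu x = mu1 (restr S x) * mu2 (restr T x)).
Hypotheses (hPS : partition_of_subset PS S) (hPT : partition_of_subset PT T).
Hypotheses (mu1PNA : PNA mu1 PS) (mu2PNA : PNA mu2 PT).
Hypotheses (pQ : is_partition Q) (cQ : coarsens Q (PS `|` PT)).
Hypothesis f_bounded : forall B, B \in Q -> forall z, 0 <= f B z <= n.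
Hypothesis f_mono : forall B, B \in Q -> monotone_dir b (f B).

Let fB B (m : Mem (S `|` T)) : R := f B (restr B m).

Let fB_bounded B : B \in Q -> forall m, 0 <= fB B m <= n.
Proof. by move=> BQ m; apply: f_bounded. Qed.

Let fB_ge0 B : B \in Q -> forall m, 0 <= fB B m.
Proof. by move=> BQ m; case/andP: (fB_bounded BQ m). Qed.

Let fB_mono B : B \in Q -> monotone_dir b (fB B).
Proof. by move=> BQ; apply: monotone_dir_comp (f_mono BQ) => m m' /restr_le. Qed.

(* Inner step: for a fixed T-part y, mu1 being PS-PNA and the trace of Q on
   S coarsening PS give the PNA inequality in the S-variables. *)
Lemma pna_inner (y : Mem T) :
  (expect mu1 (fun x => \prod_(B <- Q) fB B (join x y))%R <=
   (\prod_(B <- Q) cond_expect mu1 (fB B) y)%:E)%E.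
Proof.
apply: le_trans (pna_trace mu1PNA pQ (trace_coarsens ST0 hPS hPT cQ) _ _ _) _.
- by move=> B BQ x; apply: fB_ge0.
- move=> B BQ; apply: monotone_dir_comp (fB_mono BQ) => x x' le.
  exact: join_le.
- by move=> B BQ x x' e; rewrite /fB (restr_join_eql y e).
rewrite -prodEFin big_seq [X in (_ <= X)%E]big_seq le_eqVlt; apply/orP; left.
by apply/eqP/eq_bigr => B BQ; rewrite (cond_expectE mu1 (fB_bounded BQ)).
Qed.

(* Outer step: mu2 being PT-PNA, the inequality passes from the conditional
   expectations, which only read T-variables of their own block, to mu. *)
Lemma pna_indep_bounded : pna_ineq mu Q f.
Proof.
rewrite /pna_ineq (expect_indep ST0 muE); last first.
  by move=> m; rewrite big_seq; apply: prodr_ge0 => B BQ; apply: fB_ge0.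
apply: (@le_trans _ _ (expect mu2 (fun y => \prod_(B <- Q) cond_expect mu1 (fB B) y)%R)).
  by apply: le_esum => y _; apply: lee_wpmul2l; rewrite ?lee_fin ?dmass_ge0 ?pna_inner.
have cQT : coarsens (trace Q T) PT.
  by apply: trace_coarsens hPT hPS _; [rewrite fsetIC | rewrite fsetUC].
apply: le_trans (pna_trace mu2PNA pQ cQT _ _ _) _.
- by move=> B BQ y; apply: cond_expect_ge0 (fB_bounded BQ) y.
- by move=> B BQ; apply: cond_expect_mono (fB_bounded BQ) _ (fB_mono BQ).
- move=> B BQ y y' e; rewrite /cond_expect /fB.
  by under eq_fun do rewrite (restr_join_eqr _ e).
rewrite big_seq [X in (_ <= X)%E]big_seq le_eqVlt; apply/orP; left.
by apply/eqP/eq_bigr => B BQ; rewrite (expect_cond ST0 muE (fB_bounded BQ)).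
Qed.

End BoundedFamily.

Lemma pna_indep_prod (S T : {fset Var}) (mu1 : distr S) (mu2 : distr T)
    (PS PT : {fset {fset Var}}) :
  S `&` T = fset0 -> partition_of_subset PS S -> partition_of_subset PT T ->
  PNA mu1 PS -> PNA mu2 PT ->
  forall mu, indep_prod mu1 mu2 mu -> PNA mu (PS `|` PT).
Proof.
move=> ST0 hPS hPT mu1PNA mu2PNA mu [_ muE].
have [pPST subPST] := partition_of_subsetU ST0 hPS hPT.
split; [exact: pPST | split; first exact: subPST].
move=> Q f pQ cQ f0 /monotone_dirP[b f_mono].
apply: pna_ineq_truncate => // k k0.
apply: (pna_indep_bounded (b := b) (n := k) ST0 muE hPS hPT mu1PNA mu2PNA pQ cQ).
- by move=> B BQ z; rewrite le_min f0 // k0 ge_min lexx orbT.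
- by move=> B BQ; apply: monotone_dir_min; apply: f_mono.
Qed.

End PNAIndependentProduct.

Theorem mainTheorem8 (Var : choiceType) (R : realType) :
  (forall (S T : {fset Var}) (mu1 : distr R S) (mu2 : distr R T)
          (PS PT : {fset {fset Var}}),
     fsetI S T = fset0 ->
     partition_of_subset PS S -> partition_of_subset PT T ->
     PNA mu1 PS -> PNA mu2 PT ->
     forall mu, indep_prod mu1 mu2 mu -> PNA mu (fsetU PS PT)) /\
  (forall (S T : {fset Var}) (mu1 : distr R S) (mu2 : distr R T),
     subset (indep_prod mu1 mu2) (oplus mu1 mu2)).
Proof.
split; first exact: pna_indep_prod.
move=> S T mu1 mu2 mu [ST0 muE]; split; first exact: ST0.
split; first exact: marginal_indepl.
split; first exact: marginal_indepr.
by move=> PS PT hPS hPT mu1PNA mu2PNA; apply: pna_indep_prod mu1PNA mu2PNA _ _.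
Qed.
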